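(* Let $15\le y<x$ and let $\Psi(x,y)$ be the number of positive integers $n\le x$ having no prime divisor $>y$. Then \[ \Psi(x,y)\le C\,x\,e^{-u/2},\qquad u=\frac{\log x}{\log y},\quad C=67.21. \] *)

From Stdlib Require Import Reals.
From mathcomp Require Import all_boot.
Open Scope R_scope.

Definition Rleb (a b : R) : bool := if Rle_dec a b then true else false.

Definition smooth (y : R) (n : nat) : bool :=
  all (fun p => Rleb (INR p) y) (primes n).

(* Psi(x,y) = #{ n positive integer : n <= x, n is y-smooth }.
   Every positive integer n <= x lies in 1 .. up x (since x < up x). *)
Definition Psi (x y : R) : nat :=
  count (fun n => Rleb (INR n) x && smooth y n) (iota 1 (Z.to_nat (up x))).

(* Let M = floor y, b = 1 - 1/(2 ln y), C = 67.21, and let Psi(N, M) count the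
   M-smooth integers in [1, N].  We prove Psi(N, M) <= C N^b by strong induction on N.
   When ln N <= 6 ln M + 1/b the trivial bound Psi(N, M) <= N suffices, because then
   N^(1-b) <= e^(7/2) < C.  Otherwise write
     Psi(N, M) ln N = sum_n ln n + sum_n ln (N/n)     (n <= N, n M-smooth).
   Expanding ln n = sum_p v_p(n) ln p and counting multiples of p^v, the first sum is
   at most sum_(p <= M) ln p sum_(v >= 1) Psi(N/p^v, M) <= C N^b sum_p ln p / (p^b - 1);
   as p^b >= 1 + p/3 and sum_(p <= M) ln p / p <= 2 ln M, this is <= 6 C N^b ln M.
   By partial summation the second sum is <= C N^b / b.  Hence
   Psi(N, M) ln N <= C N^b (6 ln M + 1/b) < C N^b ln N.
   Finally Psi(x, y) <= Psi(floor x, M) <= C x^b = C x e^(-u/2). *)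

From HB Require Import structures.
From Stdlib Require Import Reals Lra Lia Psatz ZArith.
From mathcomp Require Import all_boot zify.
Open Scope R_scope.

Lemma RplusA : associative Rplus. Proof. by move=> a b c; ring. Qed.
HB.instance Definition _ := Monoid.isComLaw.Build R 0 Rplus RplusA Rplus_comm Rplus_0_l.

Notation "\rsum_ ( i <- r | P ) F" := (\big[Rplus/0]_(i <- r | P) F)
  (at level 41, F at level 41, i, r at level 50) : R_scope.
Notation "\rsum_ ( i <- r ) F" := (\big[Rplus/0]_(i <- r) F)
  (at level 41, F at level 41, i, r at level 50) : R_scope.

Section RealSums.
Variables (I : eqType) (r : seq I) (P : pred I).

Lemma rsum_le (F G : I -> R) :
  (forall i, i \in r -> P i -> F i <= G i) ->
  \rsum_(i <- r | P i) F i <= \rsum_(i <- r | P i) G i.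
Proof.
move=> leFG; rewrite big_seq_cond [X in _ <= X]big_seq_cond.
apply: (big_ind2 (fun a b => a <= b)) => [|*|i /andP[]]; [lra|lra|exact: leFG].
Qed.

Lemma rsum_mull (c : R) (F : I -> R) :
  \rsum_(i <- r | P i) (c * F i) = c * \rsum_(i <- r | P i) F i.
Proof.
by elim: r => [|a s IH]; rewrite ?big_nil ?big_cons; [ring | case: (P a); rewrite IH; ring].
Qed.

Lemma rsum_const (c : R) : \rsum_(i <- r | P i) c = INR (count P r) * c.
Proof.
elim: r => [|a s IH]; first by rewrite big_nil Rmult_0_l.
by rewrite big_cons IH /= plus_INR; case: (P a) => /=; ring.
Qed.

Lemma rsum_mulr (c : R) (F : I -> R) :
  \rsum_(i <- r | P i) (F i * c) = (\rsum_(i <- r | P i) F i) * c.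
Proof. by rewrite Rmult_comm -rsum_mull; apply: eq_bigr => i _; ring. Qed.

Lemma INR_sum (F : I -> nat) : INR (\sum_(i <- r | P i) F i) = \rsum_(i <- r | P i) INR (F i).
Proof. by apply: (big_morph INR plus_INR). Qed.

End RealSums.

Lemma ln_le x y : 0 < x -> x <= y -> ln x <= ln y.
Proof. by move=> x_gt0 [/(ln_increasing _ _ x_gt0)|->]; lra. Qed.

Lemma exp_le x y : x <= y -> exp x <= exp y.
Proof. by move=> [/exp_increasing|->]; lra. Qed.

Lemma exp_nat_mul n x : exp (INR n * x) = exp x ^ n.
Proof.
elim: n => [|n IH]; first by rewrite Rmult_0_l exp_0.
by rewrite S_INR Rmult_plus_distr_r Rmult_1_l exp_plus IH /=; ring.
Qed.

Lemma INR_gt0 {n : nat} : (0 < n)%N -> 0 < INR n.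
Proof. by move=> /ltP; apply: lt_0_INR. Qed.

Lemma INR_le {m n : nat} : (m <= n)%N -> INR m <= INR n.
Proof. by move=> /leP; apply: le_INR. Qed.

Lemma INR_expn p k : INR (p ^ k) = INR p ^ k.
Proof. by elim: k => [|k IH]; rewrite ?expn0 // expnS mult_INR IH. Qed.

Lemma ln_0 : ln 0 = 0.
Proof. by rewrite /ln; case: Rlt_dec => // lt00; case: (Rlt_irrefl _ lt00). Qed.

Lemma ln_INR_ge0 n : 0 <= ln (INR n).
Proof.
case: n => [|n]; first by rewrite ln_0; lra.
by rewrite -ln_1; apply: ln_le; rewrite ?S_INR; have := pos_INR n; lra.
Qed.

(* No positivity hypothesis is needed, since [ln 0 = 0]. *)
Lemma ln_INR_expn p k : ln (INR (p ^ k)) = INR k * ln (INR p).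
Proof.
case: p => [|p]; last by rewrite INR_expn ln_pow //; apply: INR_gt0.
rewrite INR_expn; change (INR 0) with 0; rewrite ln_0 Rmult_0_r.
by case: k => [|k]; rewrite /= ?ln_1 // Rmult_0_l ln_0.
Qed.

Lemma ln_INR_prod (J : Type) (r : seq J) (P : pred J) (F : J -> nat) :
  (forall j, P j -> (0 < F j)%N) ->
  ln (INR (\prod_(j <- r | P j) F j)) = \rsum_(j <- r | P j) ln (INR (F j)).
Proof.
move=> F_gt0; elim: r => [|j r IH]; rewrite ?big_nil ?big_cons ?ln_1 //.
case: ifP => // Pj; rewrite mult_INR ln_mult ?IH //; apply: INR_gt0; first exact: F_gt0.
by rewrite prodn_cond_gt0.
Qed.

Lemma ln_INR_le {m n : nat} : (m <= n)%N -> ln (INR m) <= ln (INR n).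
Proof.
case: m => [|m] le_mn; first by rewrite [INR 0]/= ln_0; apply: ln_INR_ge0.
by apply: ln_le; [apply: INR_gt0 | apply: INR_le].
Qed.

Lemma pow_le_reg n x y : 0 <= x -> 0 <= y -> x ^ n.+1 <= y ^ n.+1 -> x <= y.
Proof.
move=> x_ge0 y_ge0 le_pow; apply: Rnot_lt_le => lt_yx; apply: (Rle_not_lt _ _ le_pow).
elim: n {le_pow} => [|n IH]; first by rewrite /= !Rmult_1_r.
exact: (Rmult_le_0_lt_compat _ _ _ _ y_ge0 (pow_le _ n.+1 y_ge0) lt_yx IH).
Qed.

Lemma Rpower_div_pow x p b k : 0 < x -> 0 < p ->
  Rpower (x / p ^ k) b = Rpower x b * Rpower p (- b) ^ k.
Proof.
move=> x_gt0 p_gt0; have pk_gt0 := pow_lt _ k p_gt0.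
rewrite /Rpower -exp_nat_mul -exp_plus /Rdiv ln_mult ?ln_Rinv ?ln_pow //.
  by congr exp; ring.
exact: Rinv_0_lt_compat.
Qed.

Lemma rsum_geom_le q N : 0 <= q < 1 -> \rsum_(v <- index_iota 0 N) q ^ v.+1 <= q / (1 - q).
Proof.
move=> q_range.
have geom : (1 - q) * (\rsum_(v <- index_iota 0 N) q ^ v.+1) = q - q ^ N.+1.
  elim: N => [|N IH]; first by rewrite big_geq //=; ring.
  by rewrite big_nat_recr //= Rmult_plus_distr_l IH /=; ring.
have qN_ge0 := pow_le _ N.+1 (proj1 q_range).
apply: (Rmult_le_reg_l (1 - q)); first lra.
by rewrite geom; field_simplify; lra.
Qed.

Lemma fact_leq_expnn n : (n`! <= n ^ n)%N.
Proof.
elim: n => [|n IH] //; rewrite factS expnS leq_mul // (leq_trans IH) //.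
by case: n {IH} => [|n] //; rewrite leq_exp2r.
Qed.

Notation "M .-smooth" := (pnat [pred p | (p <= M)%N]) (at level 2, format "M .-smooth").

Lemma fact_smooth M : M.-smooth M`!.
Proof.
apply/pnatP => [|p p_pr]; first exact: fact_gt0.
rewrite fact_prod Euclid_dvd_prod // big_has => /hasP[i].
by rewrite mem_index_iota inE => /andP[i_gt0 lt_iM] /(dvdn_leq i_gt0); lia.
Qed.

Lemma ln_smooth {M n : nat} : M.-smooth n ->
  ln (INR n) = \rsum_(p <- index_iota 0 M.+1 | prime p) INR (logn p n) * ln (INR p).
Proof.
move=> smooth_n; rewrite -{1}(part_pnat_id smooth_n) (widen_partn _ (leq_maxl n M)).
rewrite ln_INR_prod => [|p _]; last by rewrite expn_gt0; case: p.
rewrite [RHS](big_nat_widen _ _ (maxn n M).+1) ?ltnS ?leq_maxr //.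
rewrite big_mkcond [RHS]big_mkcond /=.
apply: eq_bigr => p _; rewrite inE ltnS andbC ln_INR_expn; case: (p <= M)%N => //=.
by case: (boolP (prime p)) => // np; rewrite /logn (negbTE np) Rmult_0_l.
Qed.

Lemma logn_sum_dvdn p n N : prime p -> (0 < n <= N)%N ->
  logn p n = (\sum_(0 <= v < N) (p ^ v.+1 %| n))%N.
Proof.
move=> p_pr /andP[n_gt0 le_nN].
have le_logN : (logn p n <= N)%N by apply: ltnW; apply: leq_trans (ltn_logl p n_gt0) le_nN.
rewrite (big_cat_nat (leq0n _) le_logN) /=.
rewrite (@eq_big_nat _ _ _ 0 (logn p n) _ (fun=> 1%N)) => [|v /andP[_ lt_v]]; last first.
  by rewrite pfactor_dvdn ?lt_v.
rewrite (@eq_big_nat _ _ _ (logn p n) N _ (fun=> 0%N)) => [|v /andP[le_v _]]; last first.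
  by rewrite pfactor_dvdn // ltnNge le_v.
by rewrite sum_nat_const_nat big1 // subn0 muln1 addn0.
Qed.

Definition Psi_nat (N M : nat) : nat := count (M.-smooth) (iota 1 N).

Lemma iota1S N : iota 1 N.+1 = iota 1 N ++ [:: N.+1].
Proof. by rewrite -[N.+1]addn1 iotaD add1n addn1. Qed.

Lemma Psi_natS N M : Psi_nat N.+1 M = (Psi_nat N M + M.-smooth N.+1)%N.
Proof. by rewrite /Psi_nat iota1S count_cat /= addn0. Qed.

Lemma Psi_nat_le_id N M : (Psi_nat N M <= N)%N.
Proof. by rewrite -[X in (_ <= X)%N](size_iota 1 N) count_size. Qed.

Lemma sum_smooth_dvdn_le M d N : (0 < d)%N ->
  (\sum_(n <- iota 1 N | M.-smooth n) (d %| n) <= Psi_nat (N %/ d) M)%N.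
Proof.
move=> d_gt0; elim: N => [|N IH]; first by rewrite big_nil.
rewrite iota1S big_cat big_cons big_nil /= divnS //.
case: (boolP (d %| N.+1)) => [dvd_dN | _] /=; last by rewrite if_same addn0.
rewrite add1n Psi_natS; case: ifP => smooth_N; last by rewrite addn0 (leq_trans IH) ?leq_addr.
have -> : (N %/ d).+1 = (N.+1 %/ d)%N by rewrite divnS // dvd_dN.
by rewrite (pnat_dvd (dvdn_div dvd_dN) smooth_N) leq_add2r.
Qed.

Lemma sum_logn_le_sum_Psi_nat p N M : prime p ->
  (\sum_(n <- iota 1 N | M.-smooth n) logn p n
     <= \sum_(0 <= v < N) Psi_nat (N %/ p ^ v.+1) M)%N.
Proof.
move=> p_pr; rewrite big_seq_cond.
rewrite [X in (X <= _)%N](eq_bigr (fun n => \sum_(0 <= v < N) (p ^ v.+1 %| n))%N); last first.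
  by move=> n /andP[]; rewrite mem_iota add1n ltnS => n_range _; apply: logn_sum_dvdn.
rewrite exchange_big /= leq_sum // => v _; rewrite -big_seq_cond.
by apply: sum_smooth_dvdn_le; rewrite expn_gt0 prime_gt0.
Qed.

Lemma half_div_le_divn m d : (0 < d <= m)%N -> INR m / 2 / INR d <= INR (m %/ d).
Proof.
move=> /andP[d_gt0 le_dm]; have d_pos := INR_gt0 d_gt0.
have : (m <= 2 * (m %/ d) * d)%N.
  by have := ltn_ceil m d_gt0; have := divn_gt0 m d_gt0; rewrite le_dm; nia.
move=> /INR_le; rewrite !mult_INR [INR 2]/= => le_m.
apply: (Rmult_le_reg_r (2 * INR d)); first lra.
by field_simplify; lra.
Qed.

(* Chebyshev: ln M! = sum_p v_p(M!) ln p with v_p(M!) >= M %/ p >= M / (2 p),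
   while ln M! <= M ln M. *)
Lemma sum_ln_div_prime_le M :
  \rsum_(p <- index_iota 0 M.+1 | prime p) (ln (INR p) / INR p) <= 2 * ln (INR M).
Proof.
have [->|M_gt0] := posnP M; first by rewrite /index_iota /= big_cons big_nil /= ln_0; lra.
have M_pos := INR_gt0 M_gt0.
have ln_fact_le : ln (INR M`!) <= INR M * ln (INR M).
  by rewrite -ln_INR_expn; apply/ln_INR_le/fact_leq_expnn.
suff : INR M / 2 * (\rsum_(p <- index_iota 0 M.+1 | prime p) (ln (INR p) / INR p))
         <= ln (INR M`!) by nra.
rewrite (ln_smooth (fact_smooth M)) -rsum_mull.
apply: rsum_le => p; rewrite mem_index_iota => /andP[_ p_le] p_pr.
have p_pos := INR_gt0 (prime_gt0 p_pr).
have div_le_logn : INR M / 2 / INR p <= INR (logn p M`!).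
  apply: Rle_trans (half_div_le_divn _ _ _) (INR_le _); first by rewrite prime_gt0.
  by rewrite logn_fact // big_ltn // expn1 leq_addr.
have := ln_INR_ge0 p.
have -> : INR M / 2 * (ln (INR p) / INR p) = INR M / 2 / INR p * ln (INR p) by field; lra.
by nra.
Qed.

(* Partial summation: going from N to N + 1 the sum grows by
   count P [1, N] * ln ((N + 1) / N), and 1 + b d <= e^(b d). *)
Lemma sum_ln_ratio_le (P : pred nat) (C b : R) N : 0 < b -> 0 <= C ->
  (forall k, (k < N)%N -> INR (count P (iota 1 k)) <= C * Rpower (INR k) b) ->
  \rsum_(n <- iota 1 N | P n) (ln (INR N) - ln (INR n)) <= C * Rpower (INR N) b / b.
Proof.
move=> b_gt0 C_ge0; have binv_gt0 := Rinv_0_lt_compat _ b_gt0.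
elim: N => [|N IH] count_le.
  rewrite big_nil; apply: Rmult_le_pos; last lra.
  by apply: Rmult_le_pos => //; apply/Rlt_le/exp_pos.
set lnN1 := ln (INR N.+1); pose d := lnN1 - ln (INR N).
have d_ge0 : 0 <= d by have := ln_INR_le (leqnSn N); rewrite /d /lnN1; lra.
have -> : \rsum_(n <- iota 1 N.+1 | P n) (lnN1 - ln (INR n)) =
    \rsum_(n <- iota 1 N | P n) (ln (INR N) - ln (INR n)) + INR (count P (iota 1 N)) * d.
  rewrite iota1S big_cat big_cons big_nil -rsum_const -big_split /=.
  rewrite -/lnN1 [X in _ + X](_ : _ = 0); last by case: (P N.+1); ring.
  by rewrite Rplus_0_r; apply: eq_bigr => n _; rewrite /d; ring.
have sum_le := IH (fun k lt_kN => count_le k (leqW lt_kN)).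
have count_leN := count_le N (ltnSn N).
have -> : Rpower (INR N.+1) b = Rpower (INR N) b * exp (b * d).
  by rewrite /Rpower -exp_plus; congr exp; rewrite /d /lnN1; ring.
move: sum_le count_leN; set K := C * Rpower (INR N) b => sum_le count_leN.
have K_ge0 : 0 <= K by apply: Rmult_le_pos => //; apply/Rlt_le/exp_pos.
apply: Rle_trans (_ : K / b + K * d <= _).
  by apply: Rplus_le_compat => //; apply: Rmult_le_compat_r.
have -> : K / b + K * d = K * (1 + b * d) / b by field; lra.
rewrite /Rdiv; apply: Rmult_le_compat_r; first lra.
by rewrite -Rmult_assoc -/K; apply: Rmult_le_compat_l => //; apply: exp_ineq1_le.
Qed.

Section Bootstrap.
Variables (M : nat) (b c C : R).
Hypotheses (b_gt0 : 0 < b) (b_le1 : b <= 1) (c_gt0 : 0 < c).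
Hypothesis Rpower_prime_ge :
  forall p, prime p -> (p <= M)%N -> 1 + INR p / c <= Rpower (INR p) b.
(* Below ln N = 2 c ln M + 1/b this makes the trivial bound N <= C N^b enough. *)
Hypothesis exp_le_C : exp ((1 - b) * (2 * c * ln (INR M) + / b)) <= C.

Lemma C_gt0 : 0 < C.
Proof. exact: Rlt_le_trans (exp_pos _) exp_le_C. Qed.

Lemma C_Rpower_ge0 x : 0 <= C * Rpower x b.
Proof. by apply/Rlt_le/Rmult_lt_0_compat; [exact: C_gt0 | exact: exp_pos]. Qed.

Lemma rsum_Rpower_prime_le p N : prime p -> (p <= M)%N ->
  \rsum_(v <- index_iota 0 N) Rpower (INR p) (- b) ^ v.+1 <= c / INR p.
Proof.
move=> p_pr p_le; have p_pos : 0 < INR p := INR_gt0 (prime_gt0 p_pr).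
have pb_ge := Rpower_prime_ge _ p_pr p_le.
have pc_gt0 : 0 < INR p / c by apply: Rdiv_lt_0_compat.
have pb_gt1 : 1 < Rpower (INR p) b by lra.
move: pb_ge pb_gt1; rewrite Rpower_Ropp; set E := Rpower (INR p) b => pb_ge pb_gt1.
have E_inv_lt1 : / E < 1 by rewrite -Rinv_1; apply: Rinv_lt_contravar; lra.
apply: Rle_trans (rsum_geom_le _ N _) _; first by split; [left; apply: Rinv_0_lt_compat|]; lra.
have -> : / E / (1 - / E) = / (E - 1) by field; lra.
have -> : c / INR p = / (INR p / c) by field; lra.
by apply: Rinv_le_contravar; [apply: Rdiv_lt_0_compat|]; lra.
Qed.

Section InductionStep.
Variable N : nat.
Hypothesis N_gt0 : (0 < N)%N.
Hypothesis Psi_nat_le_below : forall k, (k < N)%N -> INR (Psi_nat k M) <= C * Rpower (INR k) b.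

Lemma Psi_nat_div_le d : (1 < d)%N ->
  INR (Psi_nat (N %/ d) M) <= C * Rpower (INR N / INR d) b.
Proof.
move=> d_gt1; have d_pos : 0 < INR d by apply: INR_gt0; apply: ltnW.
have [->|q_gt0] := posnP (N %/ d); first exact: C_Rpower_ge0.
apply: Rle_trans (Psi_nat_le_below _ (ltn_Pdiv d_gt1 N_gt0)) _.
apply: Rmult_le_compat_l; first exact/Rlt_le/C_gt0.
apply: Rle_Rpower_l; first lra.
split; first exact: INR_gt0.
apply: (Rmult_le_reg_r (INR d)) => //; rewrite -mult_INR.
by have := INR_le (leq_divM N d); rewrite /Rdiv Rmult_assoc Rinv_l ?Rmult_1_r //; lra.
Qed.

Lemma sum_logn_le_Rpower p : prime p -> (p <= M)%N ->
  INR (\sum_(n <- iota 1 N | M.-smooth n) logn p n)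
    <= C * Rpower (INR N) b * (c / INR p).
Proof.
move=> p_pr p_le; have p_pos : 0 < INR p := INR_gt0 (prime_gt0 p_pr).
have N_pos : 0 < INR N := INR_gt0 N_gt0.
apply: Rle_trans (INR_le (sum_logn_le_sum_Psi_nat _ N M p_pr)) _.
rewrite INR_sum.
apply: Rle_trans (_ : \rsum_(v <- index_iota 0 N)
    C * Rpower (INR N) b * Rpower (INR p) (- b) ^ v.+1 <= _).
  apply: rsum_le => v _ _; rewrite Rmult_assoc -Rpower_div_pow //.
  by rewrite -INR_expn; apply: Psi_nat_div_le; rewrite -{1}(expn0 p) ltn_exp2l ?prime_gt1.
rewrite rsum_mull; apply: Rmult_le_compat_l; first exact: C_Rpower_ge0.
exact: rsum_Rpower_prime_le.
Qed.

Lemma sum_ln_smooth_le :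
  \rsum_(n <- iota 1 N | M.-smooth n) ln (INR n)
    <= 2 * c * ln (INR M) * (C * Rpower (INR N) b).
Proof.
rewrite (eq_bigr _ (fun n smooth_n => ln_smooth smooth_n)) exchange_big /=.
set K := C * Rpower (INR N) b.
apply: Rle_trans (_ : \rsum_(p <- index_iota 0 M.+1 | prime p)
    c * K * (ln (INR p) / INR p) <= _).
  apply: rsum_le => p; rewrite mem_index_iota ltnS => /andP[_ p_le] p_pr.
  have p_pos : 0 < INR p := INR_gt0 (prime_gt0 p_pr).
  rewrite rsum_mulr -INR_sum.
  have := Rmult_le_compat_r _ _ _ (ln_INR_ge0 p) (sum_logn_le_Rpower _ p_pr p_le).
  move/Rle_trans; apply.
  by right; rewrite /K; field; lra.
have K_ge0 : 0 <= K := C_Rpower_ge0 (INR N).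
have cK_ge0 : 0 <= c * K by apply: Rmult_le_pos; lra.
rewrite rsum_mull; apply: Rle_trans (Rmult_le_compat_l _ _ _ cK_ge0 (sum_ln_div_prime_le M)) _.
by right; ring.
Qed.

Lemma Psi_nat_le_step : INR (Psi_nat N M) <= C * Rpower (INR N) b.
Proof.
have N_pos : 0 < INR N := INR_gt0 N_gt0.
set L := 2 * c * ln (INR M) + / b.
have L_gt0 : 0 < L.
  by have := ln_INR_ge0 M; have := Rinv_0_lt_compat _ b_gt0; rewrite /L; nra.
have [small|large] := Rle_or_lt (ln (INR N)) L.
  apply: Rle_trans (INR_le (Psi_nat_le_id N M)) _.
  rewrite {1}(_ : INR N = Rpower (INR N) (1 - b) * Rpower (INR N) b); last first.
    by rewrite -Rpower_plus (_ : 1 - b + b = 1) ?Rpower_1 //; ring.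
  apply: Rmult_le_compat_r; first exact/Rlt_le/exp_pos.
  apply: Rle_trans exp_le_C; apply/exp_le/Rmult_le_compat_l; [lra | exact: small].
set K := C * Rpower (INR N) b.
have K_ge0 : 0 <= K := C_Rpower_ge0 (INR N).
have split_ln : INR (Psi_nat N M) * ln (INR N) =
    \rsum_(n <- iota 1 N | M.-smooth n) ln (INR n) +
    \rsum_(n <- iota 1 N | M.-smooth n) (ln (INR N) - ln (INR n)).
  by rewrite -rsum_const -big_split /=; apply: eq_bigr => n _; ring.
have := sum_ln_ratio_le _ _ _ N b_gt0 (Rlt_le _ _ C_gt0) Psi_nat_le_below.
have := sum_ln_smooth_le; rewrite -/K => sum_ln sum_ratio.
apply: (Rmult_le_reg_r (ln (INR N))); first lra.
rewrite split_ln; apply: Rle_trans (Rplus_le_compat _ _ _ _ sum_ln sum_ratio) _.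
have -> : 2 * c * ln (INR M) * K + K / b = K * L by rewrite /L; field; lra.
by apply: Rmult_le_compat_l; lra.
Qed.
End InductionStep.

Lemma Psi_nat_le_Rpower N : INR (Psi_nat N M) <= C * Rpower (INR N) b.
Proof.
elim/ltn_ind: N => N IH; have [->|N_gt0] := posnP N; first exact: C_Rpower_ge0.
exact: Psi_nat_le_step.
Qed.

End Bootstrap.

Lemma ln_ge2 {y : R} : 15 <= y -> 2 <= ln y.
Proof.
move=> y_ge; rewrite -(ln_exp 2); apply: ln_le; first exact: exp_pos.
have -> : 2 = INR 2 * 1 by rewrite /=; ring.
rewrite exp_nat_mul /=; have := exp_le_3; have := exp_pos 1; nra.
Qed.

Lemma inv_2ln_bounds {y : R} : 15 <= y -> 0 < / (2 * ln y) <= / 4.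
Proof.
move=> y_ge; have := ln_ge2 y_ge => ln_y.
by split; [apply: Rinv_0_lt_compat | apply: Rinv_le_contravar]; lra.
Qed.

Lemma exp_7_2_le : exp (7 / 2) <= 6721 / 100.
Proof.
have sq : exp (7 / 2) ^ 2 = exp 1 ^ 7 by rewrite -!exp_nat_mul; congr exp; rewrite /=; field.
have : exp 1 ^ 7 <= 3 ^ 7 by apply: pow_incr; have := exp_pos 1; have := exp_le_3; lra.
have := exp_pos (7 / 2); rewrite /= in sq *; nra.
Qed.

Lemma Rpower_3_4_pow4 {x : R} : 0 < x -> Rpower x (3 / 4) ^ 4 = x ^ 3.
Proof.
move=> x_gt0; rewrite -Rpower_pow ?Rpower_mult -?Rpower_pow //; last exact: exp_pos.
by congr Rpower; rewrite /=; field.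
Qed.

Lemma Rpower_prime_ge y p : 15 <= y -> prime p -> INR p <= y ->
  1 + INR p / 3 <= Rpower (INR p) (1 - / (2 * ln y)).
Proof.
move=> y_ge p_pr p_le; have ln_y := ln_ge2 y_ge; have [t_pos t_le] := inv_2ln_bounds y_ge.
move: t_pos t_le; set t := / (2 * ln y) => t_pos t_le.
have t_ln_y : t * ln y = / 2 by rewrite /t; field; lra.
have p_ge2 : 2 <= INR p by have := INR_le (prime_gt1 p_pr); rewrite [INR 2]/=; lra.
have [p_ge5|p_lt5] := leqP 5 p.
  have p_ge5R : 5 <= INR p by have := INR_le p_ge5; rewrite [INR 5]/=; lra.
  have exp_half : 4 / 7 <= exp (- / 2).
    have : exp (- / 2) ^ 2 = / exp 1.
      by rewrite -exp_nat_mul -exp_Ropp; congr exp; rewrite /=; field.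
    have : / 3 <= / exp 1 by apply: Rinv_le_contravar; [exact: exp_pos | exact: exp_le_3].
    have := exp_pos (- / 2); rewrite /=; nra.
  have : exp (- / 2) <= exp (- (t * ln (INR p))).
    by apply/exp_le; have := ln_le _ _ (Rlt_le_trans _ _ _ Rlt_0_2 p_ge2) p_le; nra.
  rewrite /Rpower (_ : (1 - t) * ln (INR p) = ln (INR p) + - (t * ln (INR p))); last ring.
  by rewrite exp_plus exp_ln; nra.
apply: Rle_trans (Rle_Rpower _ _ _ _ (_ : 3 / 4 <= 1 - t)); [|lra|lra].
have := exp_pos (3 / 4 * ln (INR p)); rewrite -/(Rpower (INR p) (3 / 4)).
have := Rpower_3_4_pow4 (Rlt_le_trans _ _ _ Rlt_0_2 p_ge2).
set a := Rpower _ _ => a_pow4 a_gt0.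
have : p \in [seq q <- iota 0 5 | prime q] by rewrite mem_filter p_pr mem_iota.
by rewrite /= !inE => /orP[]/eqP p_eq; apply: (pow_le_reg 3); rewrite ?a_pow4 ?p_eq /=; lra.
Qed.

Lemma Psi_nat_le_Rpower_floor y M N : 15 <= y -> INR M <= y < INR M + 1 ->
  INR (Psi_nat N M) <= 6721 / 100 * Rpower (INR N) (1 - / (2 * ln y)).
Proof.
move=> y_ge [M_le_y y_lt_M1]; have ln_y := ln_ge2 y_ge; have M_pos : 0 < INR M by lra.
have [t_pos t_le] := inv_2ln_bounds y_ge; move: t_pos t_le; set t := / (2 * ln y) => t_pos t_le.
apply: (Psi_nat_le_Rpower _ _ 3); [lra | lra | lra | | ].
  by move=> p p_pr /INR_le p_le; apply: Rpower_prime_ge => //; lra.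
apply: Rle_trans exp_7_2_le; apply: exp_le; rewrite (_ : 1 - (1 - t) = t); last ring.
have inv_b_le : / (1 - t) <= 4 / 3 by rewrite -[4 / 3]Rinv_div; apply: Rinv_le_contravar; lra.
have inv_b_ge0 : 0 <= / (1 - t) by apply/Rlt_le/Rinv_0_lt_compat; lra.
have := Rmult_le_compat _ _ _ _ (Rlt_le _ _ t_pos) inv_b_ge0 t_le inv_b_le.
have := Rmult_le_compat_l _ _ _ (Rlt_le _ _ t_pos) (ln_le _ _ M_pos M_le_y).
have : t * ln y = / 2 by rewrite /t; field; lra.
lra.
Qed.

Lemma floor_nat {x : R} : 0 <= x ->
  exists N : nat, INR N <= x < INR N + 1 /\ Z.to_nat (up x) = N.+1.
Proof.
move=> x_ge0; have [up_gt up_le] := archimed x.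
have up_pos : (0 < up x)%Z by apply: lt_IZR; lra.
exists (Z.to_nat (up x)).-1.
have up_S : (Z.to_nat (up x)).-1.+1 = Z.to_nat (up x) by rewrite prednK //; apply/ltP; lia.
have up_nat : INR (Z.to_nat (up x)) = IZR (up x) by rewrite INR_IZR_INZ Z2Nat.id //; lia.
have : INR (Z.to_nat (up x)).-1 + 1 = IZR (up x) by rewrite -S_INR up_S up_nat.
by rewrite up_S => up_eq; split => //; lra.
Qed.

Lemma Rleb_INR_floor y M p : INR M <= y < INR M + 1 -> Rleb (INR p) y = (p <= M)%N.
Proof.
move=> [M_le_y y_lt_M1]; rewrite /Rleb; case: Rle_dec => [p_le_y|p_gt_y]; case: leqP => //.
  by move=> /INR_le; rewrite S_INR; lra.
by move=> /INR_le p_le_M; case: p_gt_y; lra.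
Qed.

Lemma Psi_le_Psi_nat {x y : R} {M N : nat} : INR M <= y < INR M + 1 -> x < INR N.+1 ->
  Z.to_nat (up x) = N.+1 -> (Psi x y <= Psi_nat N M)%N.
Proof.
move=> y_floor x_lt up_x.
have N1_gt_x : Rleb (INR N.+1) x = false by rewrite /Rleb; case: Rle_dec => // ?; exfalso; lra.
rewrite /Psi up_x iota1S count_cat /= N1_gt_x -[Psi_nat N M]addn0 leq_add //.
rewrite (@eq_in_count _ _ (fun n => Rleb (INR n) x && M.-smooth n)).
  by apply: sub_count => n /andP[].
move=> n; rewrite mem_iota => /andP[n_gt0 _] /=; rewrite /smooth /pnat n_gt0.
by congr (_ && _); apply: eq_all => p; apply: Rleb_INR_floor.
Qed.

Theorem lemma2 (x y : R) (hy : 15 <= y) (hxy : y < x) :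
  INR (Psi x y) <= (6721 / 100) * x * exp (- ((ln x / ln y) / 2)).
Proof.
have [M [y_floor _]] := @floor_nat y ltac:(lra).
have [N [[N_le_x x_lt_N1] up_x]] := @floor_nat x ltac:(lra).
have x_lt : x < INR N.+1 by rewrite S_INR.
have N_pos : 0 < INR N by lra.
have [t_pos t_le] := inv_2ln_bounds hy; have ln_y := ln_ge2 hy.
apply: Rle_trans (INR_le (Psi_le_Psi_nat y_floor x_lt up_x)) _.
apply: Rle_trans (Psi_nat_le_Rpower_floor _ _ N hy y_floor) _.
rewrite Rmult_assoc; apply: Rmult_le_compat_l; first lra.
apply: Rle_trans (Rle_Rpower_l _ _ _ _ (conj N_pos N_le_x)) _; first lra.
right; rewrite /Rpower -{2}(exp_ln x) -?exp_plus; last lra.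
by congr exp; field; lra.
Qed.
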